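(* Let $P$ be a property of metric spaces such that: (i) $P$ is hereditary, i.e., if $X$ has $P$ and $Z\subseteq X$ (with the induced metric), then $Z$ has $P$; (ii) $P$ is preserved under uniformly continuous images, i.e., if $X$ has $P$ and $g:X\to Y$ is a uniformly continuous surjection onto a metric space $Y$, then $Y$ has $P$; and (iii) $P$ is not preserved under continuous images, i.e., there exist metric spaces $X$, $Y$ and a continuous surjection $f:X\to Y$ such that $X$ has $P$ and $Y$ does not have $P$. Then $P$ is not preserved under homeomorphic images: there exist homeomorphic metric spaces $Z$ and $Z'$ such that $Z$ has $P$ and $Z'$ does not have $P$. *)

From Stdlib Require Import Reals.
Open Scope R_scope.

Record MetricSpace : Type := {
  carrier :> Type;
  dist : carrier -> carrier -> R;
  dist_ge0 : forall x y, 0 <= dist x y;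
  dist_eq0 : forall x y, dist x y = 0 <-> x = y;
  dist_sym : forall x y, dist x y = dist y x;
  dist_tri : forall x y z, dist x z <= dist x y + dist y z
}.

Arguments dist {m} _ _.

Definition subspace (X : MetricSpace) (Z : X -> Prop) : MetricSpace.
Proof.
  refine {| carrier := {x : X | Z x};
            dist := fun a b => @dist X (proj1_sig a) (proj1_sig b) |}.
  - intros; apply dist_ge0.
  - intros [a Ha] [b Hb]; simpl; split.
    + intro H; apply dist_eq0 in H; subst b.
      assert (Ha = Hb) by apply Classical_Prop.proof_irrelevance; subst; reflexivity.
    + intro H; injection H as H; subst; apply dist_eq0; reflexivity.
  - intros; apply dist_sym.
  - intros; apply dist_tri.
Defined.

Definition continuous_map {X Y : MetricSpace} (f : X -> Y) : Prop :=
  forall x (eps : R), 0 < eps -> exists delta, 0 < delta /\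
    forall y, dist x y < delta -> dist (f x) (f y) < eps.

Definition uniformly_continuous {X Y : MetricSpace} (f : X -> Y) : Prop :=
  forall eps : R, 0 < eps -> exists delta, 0 < delta /\
    forall x y, dist x y < delta -> dist (f x) (f y) < eps.

Definition surjective {A B : Type} (f : A -> B) : Prop :=
  forall b, exists a, f a = b.

Definition homeomorphic (X Y : MetricSpace) : Prop :=
  exists (f : X -> Y) (g : Y -> X),
    (forall x, g (f x) = x) /\ (forall y, f (g y) = y) /\
    continuous_map f /\ continuous_map g.

Definition hereditary (P : MetricSpace -> Prop) : Prop :=
  forall (X : MetricSpace) (Z : X -> Prop), P X -> P (subspace X Z).

Definition preserved_by_unif_cont_images (P : MetricSpace -> Prop) : Prop :=
  forall (X Y : MetricSpace) (g : X -> Y),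
    P X -> uniformly_continuous g -> surjective g -> P Y.

Definition preserved_by_cont_images (P : MetricSpace -> Prop) : Prop :=
  forall (X Y : MetricSpace) (f : X -> Y),
    P X -> continuous_map f -> surjective f -> P Y.

Definition preserved_by_homeomorphic_images (P : MetricSpace -> Prop) : Prop :=
  forall (Z Z' : MetricSpace), homeomorphic Z Z' -> P Z -> P Z'.

(* Adding [dist (f a) (f b)] to the metric of [X] does not change its
   topology when [f] is continuous, but makes [f] 1-Lipschitz.  Hence [X]
   is homeomorphic to [X] with this graph metric, and a property preserved
   by uniformly continuous images that held for the latter would pass to
   [Y]. *)
From Stdlib Require Import Reals Lra.
(* Imported after [Reals], whose own [dist], [dist_sym], [dist_tri] it must shadow. *)
Open Scope R_scope.

Lemma dist_self (X : MetricSpace) (x : X) : dist x x = 0.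
Proof. apply dist_eq0; reflexivity. Qed.

Definition nonexpansive {X Y : MetricSpace} (f : X -> Y) : Prop :=
  forall x y, dist (f x) (f y) <= dist x y.

Lemma nonexpansive_uniformly_continuous {X Y : MetricSpace} (f : X -> Y) :
  nonexpansive f -> uniformly_continuous f.
Proof.
  intros Hf eps Heps; exists eps; split; [exact Heps |].
  intros x y Hxy; specialize (Hf x y); lra.
Qed.

Lemma uniformly_continuous_continuous {X Y : MetricSpace} (f : X -> Y) :
  uniformly_continuous f -> continuous_map f.
Proof.
  intros Hf x eps Heps; destruct (Hf eps Heps) as [delta [Hdelta Hf']].
  exists delta; split; [exact Hdelta |]; intros y; apply Hf'.
Qed.

Section GraphMetric.

Context {X Y : MetricSpace} (f : X -> Y).

Definition graph_space : MetricSpace.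
Proof.
  refine {| carrier := X;
            dist := fun a b => dist a b + dist (f a) (f b) |}.
  - intros a b; pose proof (dist_ge0 X a b); pose proof (dist_ge0 Y (f a) (f b)); lra.
  - intros a b; split.
    + intro Hab; apply (dist_eq0 X).
      pose proof (dist_ge0 X a b); pose proof (dist_ge0 Y (f a) (f b)); lra.
    + intros <-; rewrite !dist_self; lra.
  - intros a b; rewrite (dist_sym X a b), (dist_sym Y (f a)); reflexivity.
  - intros a b c; pose proof (dist_tri X a b c); pose proof (dist_tri Y (f a) (f b) (f c)); lra.
Defined.

Definition to_graph (x : X) : graph_space := x.
Definition of_graph (x : graph_space) : X := x.
Definition graph_map (x : graph_space) : Y := f x.

Lemma of_graph_nonexpansive : nonexpansive of_graph.
Proof. intros x y; unfold of_graph; cbn; pose proof (dist_ge0 Y (f x) (f y)); lra. Qed.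

Lemma graph_map_nonexpansive : nonexpansive graph_map.
Proof. intros x y; unfold graph_map; cbn; pose proof (dist_ge0 X x y); lra. Qed.

Lemma to_graph_continuous : continuous_map f -> continuous_map to_graph.
Proof.
  intros Hf x eps Heps.
  destruct (Hf x (eps / 2)) as [delta [Hdelta Hf']]; [lra |].
  exists (Rmin delta (eps / 2)); split; [apply Rmin_pos; lra |].
  intros y Hxy; unfold to_graph; cbn.
  pose proof (Rmin_l delta (eps / 2)); pose proof (Rmin_r delta (eps / 2)).
  specialize (Hf' y ltac:(lra)); lra.
Qed.

Lemma homeomorphic_graph_space : continuous_map f -> homeomorphic X graph_space.
Proof.
  intros Hf; exists to_graph, of_graph.
  repeat split.
  - exact (to_graph_continuous Hf).
  - apply uniformly_continuous_continuous, nonexpansive_uniformly_continuous.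
    exact of_graph_nonexpansive.
Qed.

End GraphMetric.

Theorem proposition2p2 (P : MetricSpace -> Prop) :
  hereditary P ->
  preserved_by_unif_cont_images P ->
  (exists (X Y : MetricSpace) (f : X -> Y),
      continuous_map f /\ surjective f /\ P X /\ ~ P Y) ->
  exists Z Z' : MetricSpace, homeomorphic Z Z' /\ P Z /\ ~ P Z'.
Proof.
  intros _ HP [X [Y [f [Hf [Hsurj [HX HY]]]]]].
  exists X, (graph_space f); repeat split.
  - exact (homeomorphic_graph_space f Hf).
  - exact HX.
  - intros Hgraph; apply HY.
    apply (HP _ Y (graph_map f) Hgraph); [| exact Hsurj].
    apply nonexpansive_uniformly_continuous, graph_map_nonexpansive.
Qed.
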